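(* Let $(X_n)_{n\ge 0}$ be a time-homogeneous Markov chain on a measurable state space $\Omega$, let $S\subset\Omega$ be a measurable set, let $\tau=\min\{n\ge 0: X_n\notin S\}$, and let $\nu$ be a quasistationary distribution (QSD) of the chain in $S$. Fix integers $N\ge 1$ and $T_{\rm poll}\ge 1$. Let $(X^1_n)_{n\ge0},\dots,(X^N_n)_{n\ge0}$ be $N$ independent copies of the Markov chain (same transition kernel) whose initial positions $X^1_0,\dots,X^N_0$ are i.i.d. with law exactly $\nu$, and let $\tau^j=\min\{n\ge0: X^j_n\notin S\}$. Define $$M=\min\{m\ge 1:\ \exists\, j\in\{1,\dots,N\}\text{ with } \tau^j\le mT_{\rm poll}\},\qquad K=\min\{j\in\{1,\dots,N\}:\ \tau^j\le MT_{\rm poll}\},$$ and $$X_{\rm acc}=X^K_{\tau^K},\qquad T_{\rm acc}=(N-1)(M-1)T_{\rm poll}+(K-1)T_{\rm poll}+\tau^K .$$ (That is, the replicas are run synchronously in blocks of $T_{\rm poll}$ steps until some replica leaves $S$ during a block; $K$ is the smallest index of a replica leaving $S$ during that block.) Then $(X_{\rm acc},T_{\rm acc})$ has the same law as $(X_\tau,\tau)$, where $(X_n)_{n\ge 0}$ is the Markov chain started from $X_0\sim\nu$.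
   Context: A probability measure $\nu$ with support in $S$ is a quasistationary distribution (QSD) in $S$ if for every measurable $A\subset S$ and every $n\in\mathbb N$, $\nu(A)=\mathbb P^\nu(X_n\in A\mid \tau>n)$, where $\mathbb P^\nu$ denotes the law of the chain started from $X_0\sim\nu$ and $\tau=\min\{n\ge0: X_n\notin S\}$ is the first exit time from $S$. *)

From HB Require Import structures.
From mathcomp Require Import all_boot all_order all_algebra.
From mathcomp Require Import all_classical all_reals all_analysis.
Set Implicit Arguments. Unset Strict Implicit. Unset Printing Implicit Defensive.
Import Order.TTheory GRing.Theory Num.Theory.
Local Open Scope classical_set_scope.
Local Open Scope ring_scope.

Definition omin (P : pred nat) : option nat :=
  match pselect (exists n, P n) with
  | left h => Some (ex_minn h)
  | right _ => None
  end.

(* "t <= b" for an option-valued time (None = +infinity) *)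
Definition ole (t : option nat) (b : nat) : bool :=
  if t is Some s then (s <= b)%N else false.

Section Chains.
Context {d : measure_display} {Omega : measurableType d}.

Definition exit_time (S : set Omega) (x : nat -> Omega) : option nat :=
  omin (fun n => x n \notin S).

Definition exit_data (S : set Omega) (x : nat -> Omega) : option (Omega * nat) :=
  if exit_time S x is Some t then Some (x t, t) else None.

(* The parallel-replica output (X_acc, T_acc) computed from N paths xs.
   Replicas are indexed 0..N-1, so the paper's K equals k+1 here. *)
Definition par_data (N Tpoll : nat) (S : set Omega) (xs : 'I_N -> nat -> Omega)
    : option (Omega * nat) :=
  let tau j := exit_time S (xs j) in
  match omin (fun m => (0 < m)%N && [exists j : 'I_N, ole (tau j) (m * Tpoll)]) with
  | None => None
  | Some M =>
    match omin (fun k => [exists j : 'I_N, (nat_of_ord j == k) && ole (tau j) (M * Tpoll)]) with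
    | None => None
    | Some k =>
      match insub k : option 'I_N with
      | None => None
      | Some K =>
        match tau K with
        | None => None
        | Some tK => Some (xs K tK, (N - 1) * (M - 1) * Tpoll + k * Tpoll + tK)%N
        end
      end
    end
  end.

Context {R : realType} {dT : measure_display} {T : measurableType dT}.

(* X is a time-homogeneous Markov chain with transition kernel k under P
   (Markov property with respect to its natural filtration). *)
Definition markov_chain (P : probability T R) (k : R.-pker Omega ~> Omega)
    (X : nat -> T -> Omega) : Prop :=
  (forall n, measurable_fun setT (X n)) /\
  forall (n : nat) (A : nat -> set Omega) (B : set Omega),
    (forall i, measurable (A i)) -> measurable B ->
    (P ([set w | forall i, (i <= n)%N -> A i (X i w)] `&` [set w | B (X n.+1 w)]) =
    \int[P]_(w in [set w | forall i, (i <= n)%N -> A i (X i w)]) k (X n w) B)%E.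

Definition initial_law (P : probability T R) (X : nat -> T -> Omega)
    (nu : probability Omega R) : Prop :=
  forall A, measurable A -> P (X 0%N @^-1` A) = nu A.

Definition cond_prob (P : probability T R) (A B : set T) : \bar R :=
  (P (A `&` B) * (P B)^-1)%E.

Definition survives (S : set Omega) (X : nat -> T -> Omega) (n : nat) : set T :=
  [set w | ~~ ole (exit_time S (fun i => X i w)) n].

(* nu is a quasistationary distribution in S for the chain X started from nu
   (the conditioning events {tau > n} are required to have positive probability
   so that the conditional probabilities are defined). *)
Definition is_qsd (P : probability T R) (X : nat -> T -> Omega) (S : set Omega)
    (nu : probability Omega R) : Prop :=
  nu (~` S) = 0%E /\
  forall (A : set Omega) (n : nat), measurable A -> A `<=` S ->
    (0 < P (survives S X n))%E /\
    nu A = cond_prob P (X n @^-1` A) (survives S X n).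

(* the N processes Xs j are mutually independent (finite-dimensional cylinders) *)
Definition indep_processes (N : nat) (P : probability T R)
    (Xs : 'I_N -> nat -> T -> Omega) : Prop :=
  forall (n : nat) (A : 'I_N -> nat -> set Omega),
    (forall j i, measurable (A j i)) ->
    P [set w | forall j i, (i <= n)%N -> A j i (Xs j i w)] =
    (\prod_(j < N) P [set w | forall i, (i <= n)%N -> A j i (Xs j i w)])%E.

End Chains.

Arguments par_data {d Omega} N Tpoll S xs.

From HB Require Import structures.
From mathcomp Require Import all_boot all_order all_algebra.
From mathcomp Require Import all_classical all_reals all_analysis.
From mathcomp Require Import measurable_realfun zify.
Set Implicit Arguments. Unset Strict Implicit. Unset Printing Implicit Defensive.
Import Order.TTheory GRing.Theory Num.Theory.
Local Open Scope classical_set_scope.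
Local Open Scope ring_scope.

(** The QSD [nu] is a left eigenvector, with eigenvalue [lambda = P(tau > 1)],
    of the transition kernel killed outside [S]: [\int_S k x (B `&` S) dnu = lambda nu (B `&` S)].
    Hence a chain started from [nu] survives [n] steps with probability
    [lambda ^ n], and [P(X_tau \in A, tau = t + 1) = lambda ^ t * c] with
    [c = \int_S k x (A `\` S) dnu].  For the replicas, [T_acc = n] determines the
    block [M], the accepted index [K] and its exit time [t], because
    [n - 1 = (N (M - 1) + K) Tpoll + s] with [s < Tpoll]; the event is then a
    product cylinder, and by independence its probability is a product of
    survival probabilities, of total exponent [n - 1], times the same factor [c]. *)

Lemma omin_SomeP (P : pred nat) m :
  omin P = Some m <-> P m /\ (forall i, (i < m)%N -> ~~ P i).
Proof.
rewrite /omin; case: pselect => [exP|noP]; last first.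
  by split=> // -[Pm _]; case: noP; exists m.
case: ex_minnP => m0 Pm0 min0; split=> [[<-]|[Pm minm]].
  by split=> // i; apply: contraTN => /min0; rewrite -leqNgt.
congr Some; apply/eqP; rewrite eqn_leq min0 //=.
by rewrite leqNgt; apply: contraTN Pm0 => /minm.
Qed.

Section exit_time.
Context {d : measure_display} {Omega : measurableType d} (S : set Omega).
Implicit Types (x : nat -> Omega).

Lemma exit_time_SomeP x t :
  exit_time S x = Some t <-> ~ S (x t) /\ (forall i, (i < t)%N -> S (x i)).
Proof.
by rewrite /exit_time omin_SomeP notin_setE; split=> -[xt xS]; split=> // i /xS;
  rewrite negbK inE.
Qed.

Lemma ole_exit_timePn x b :
  ~~ ole (exit_time S x) b <-> forall i, (i <= b)%N -> S (x i).
Proof.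
rewrite /exit_time /omin; case: pselect => [exP|noP] /=; last first.
  split=> // _ i _; apply: contrapT => xSi; apply: noP; exists i.
  by rewrite notin_setE.
case: ex_minnP => t; rewrite notin_setE -ltnNge => xSt mint.
split=> [bt i ib|xS]; last by rewrite ltnNge; apply/negP => tb; exact: xSt (xS _ tb).
apply: contrapT => xSi; have := mint i; rewrite notin_setE => /(_ xSi).
by rewrite leqNgt (leq_ltn_trans ib bt).
Qed.

Lemma exit_data_SomeP (B : set Omega) x n :
  (exists y, exit_data S x = Some (y, n) /\ B y) <-> exit_time S x = Some n /\ B (x n).
Proof.
rewrite /exit_data; case: exit_time => [t|]; last by split=> [[y []]|[]].
by split=> [[y [[<- <-]]] //|[[<-] Bx]]; exists (x t).
Qed.

End exit_time.

Section par_decomp.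
Local Open Scope nat_scope.
Variables N T : nat.

(* [n] is the accepted time [T_acc] when replica [k] (counted from 0) is
   accepted during block [M] with exit time [t]. *)
Definition par_decomp (M k t n : nat) : Prop :=
  [/\ 0 < M, k < N, t <= M * T, 1 < M -> (M - 1) * T < t
    & n = (N - 1) * (M - 1) * T + k * T + t].

Lemma par_decompE M k t n : par_decomp M k t n -> 0 < t ->
  let q := (n - 1) %/ T in
  [/\ M = q %/ N + 1, k = q %% N & t = q %/ N * T + (n - 1) %% T + 1].
Proof.
move=> [M0 kN leMt ltMt nE] t0 q.
have {}ltMt : (M - 1) * T < t.
  by case: (ltnP 1 M) => [/ltMt //|M1]; rewrite (_ : M - 1 = 0) ?mul0n //; lia.
have T0 : 0 < T by rewrite lt0n; apply/eqP => T0; move: ltMt leMt; rewrite T0 !muln0; lia.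
have MT : M * T = (M - 1) * T + T by rewrite -{1}(subnK M0) mulnDl mul1n.
have NM : (N - 1) * (M - 1) * T + (M - 1) * T = (M - 1) * N * T.
  by rewrite -mulnDl -{2}(mul1n (M - 1)) -mulnDl subnK ?(mulnC N) // (leq_ltn_trans _ kN).
set s := t - (M - 1) * T - 1.
have sT : s < T by rewrite /s; lia.
have en : n - 1 = ((M - 1) * N + k) * T + s.
  rewrite nE mulnDl /s; move: NM ltMt.
  (* [lia] fails on products containing truncated subtractions: abstract them. *)
  by move: ((N - 1) * (M - 1) * T) ((M - 1) * T) ((M - 1) * N * T) => a b c; lia.
have qE : q = (M - 1) * N + k by rewrite /q en divnMDl // divn_small // addn0.
rewrite qE divnMDl ?(leq_ltn_trans _ kN) // divn_small // addn0 subnK //.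
by rewrite modnMDl modn_small // en modnMDl modn_small // /s; split=> //; lia.
Qed.

Lemma par_decomp_uniq M k t M' k' t' n :
  par_decomp M k t n -> 0 < t -> par_decomp M' k' t' n -> 0 < t' ->
  [/\ M = M', k = k' & t = t'].
Proof. by move=> /par_decompE dec /dec[-> -> ->] /par_decompE dec' /dec'[-> -> ->]. Qed.

Lemma par_decomp_exists n : 0 < N -> 0 < T -> 0 < n ->
  exists M k t, par_decomp M k t n /\ 0 < t.
Proof.
move=> N0 T0 n0; set q := (n - 1) %/ T; set r := (n - 1) %% T.
have rT : r < T by rewrite ltn_pmod.
have kN : q %% N < N by rewrite ltn_pmod.
have nE : n - 1 = q * T + r := divn_eq _ _.
have qE : q = q %/ N * N + q %% N := divn_eq _ _.
exists (q %/ N + 1), (q %% N), (q %/ N * T + r + 1); split; last by rewrite addn1.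
split => //; rewrite ?addnK.
- by rewrite addn1.
- by rewrite mulnDl mul1n; lia.
- by lia.
have NM : (N - 1) * (q %/ N) * T + q %/ N * T = q %/ N * N * T.
  by rewrite -mulnDl -{2}(mul1n (q %/ N)) -mulnDl subnK ?(mulnC N).
rewrite qE mulnDl in nE; move: NM nE.
by move: ((N - 1) * (q %/ N) * T) (q %/ N * T) (q %/ N * N * T) (q %% N * T) => a b c e; lia.
Qed.

Lemma par_exponent_sum M (K : 'I_N) t n : par_decomp M K t n -> 0 < t ->
  \sum_(j < N) (if j < K then M * T else if j == K then t.-1 else (M - 1) * T)
  = n.-1.
Proof.
move=> [M0 KN leMt _ ->] t0.
pose F j := if j < K then M * T else if j == K then t.-1 else (M - 1) * T.
rewrite (eq_bigr (F \o val)) => [|j _]; last by rewrite /F /= val_eqE.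
rewrite -(big_mkord xpredT F) (big_cat_nat _ (n := K)) //=; last exact: ltnW.
rewrite [X in _ + X]big_ltn // {2}/F ltnn eqxx.
rewrite (eq_big_nat _ _ (F2 := fun _ => M * T)) => [|i /andP[_ iK]]; last by rewrite /F iK.
rewrite [X in _ + (_ + X)](eq_big_nat _ _ (F2 := fun _ => (M - 1) * T)); last first.
  by move=> i /andP[Ki _]; rewrite /F ltnNge (ltnW Ki) /= gtn_eqF.
rewrite !sum_nat_const_nat subn0 -{1}(subnK M0) mulnDl mul1n mulnDr -mulnA.
have NK : N - 1 = K + (N - K.+1) by lia.
rewrite NK mulnDl; move: (K * ((M - 1) * T)) (K * T) ((N - K.+1) * ((M - 1) * T)).
by move=> a b c; lia.
Qed.

End par_decomp.

Section par_data.
Context {d : measure_display} {Omega : measurableType d}.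
Variables (N T : nat) (S A : set Omega).
Implicit Types xs : 'I_N -> nat -> Omega.

Lemma par_dataP xs y n :
  par_data N T S xs = Some (y, n) <->
  exists M (K : 'I_N) t, [/\ par_decomp N T M K t n, y = xs K t,
    exit_time S (xs K) = Some t,
    (1 < M)%N -> forall j i, (i <= (M - 1) * T)%N -> S (xs j i) &
    forall (j : 'I_N) i, (j < K)%N -> (i <= M * T)%N -> S (xs j i)].
Proof.
split.
  rewrite /par_data.
  case EM: omin => [M|] //; case EK: omin => [k|] //.
  case: insubP => [K _ kK|] //; case Et: exit_time => [t|] //= [<- <-].
  move: EM EK => /omin_SomeP[/andP[M0 _] minM] /omin_SomeP[/existsP[j /andP[/eqP jk]]].
  have -> : j = K by apply: val_inj; rewrite /= jk kK.
  rewrite Et /= => leMt minK.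
  have stay_prev : (1 < M)%N -> forall j' i, (i <= (M - 1) * T)%N -> S (xs j' i).
    move=> M1 j' i iM; have /minM : (M - 1 < M)%N by lia.
    by rewrite subn_gt0 M1 => /existsPn/(_ j')/ole_exit_timePn; apply.
  have [xKt _] := (exit_time_SomeP _ _ _).1 Et.
  exists M, K, t; split => //.
  - split => //; last by rewrite kK.
    by move=> M1; rewrite ltnNge; apply/negP => /(stay_prev M1 K); exact: xKt.
  - move=> j' i j'K iM; have j'k : (j' < k)%N by rewrite -kK.
    have /existsPn/(_ j') := minK _ j'k.
    by rewrite eqxx => /ole_exit_timePn; apply.
move=> [M [K [t [[M0 _ leMt _ ->] -> Et stay_prev stay_K]]]].
rewrite /par_data.
have -> : omin (fun m => (0 < m)%N &&
    [exists j : 'I_N, ole (exit_time S (xs j)) (m * T)]) = Some M.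
  apply/omin_SomeP; split; first by rewrite M0; apply/existsP; exists K; rewrite Et.
  move=> m mM; rewrite negb_and -implybE; apply/implyP => m0.
  apply/existsPn => j; apply/ole_exit_timePn => i imT; apply: stay_prev; first by lia.
  by rewrite (leq_trans imT) // leq_mul2r; apply/orP; right; lia.
have -> : omin (fun k => [exists j : 'I_N, (nat_of_ord j == k) &&
    ole (exit_time S (xs j)) (M * T)]) = Some (nat_of_ord K).
  apply/omin_SomeP; split; first by apply/existsP; exists K; rewrite eqxx Et.
  move=> i iK; apply/existsPn => j; rewrite negb_and -implybE.
  by apply/implyP => /eqP ji; apply/ole_exit_timePn => i' i'M; apply: stay_K; rewrite ?ji.
by rewrite valK Et.
Qed.

(* Given the decomposition [(M, K, t)] of [n], the event [T_acc = n, X_acc \in A]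
   as a cylinder: replicas before [K] stay in [S] for [M] blocks, replica [K]
   leaves [S] into [A] at time [t], later replicas stay in [S] for [M - 1] blocks. *)
Definition par_cyl (M : nat) (K : 'I_N) (t : nat) (j : 'I_N) (i : nat) : set Omega :=
  if (j < K)%N then S
  else if j == K then (if (i < t)%N then S else if i == t then A `&` ~` S else setT)
  else if (1 < M)%N && (i <= (M - 1) * T)%N then S else setT.

Lemma par_cylP xs M K t : (t <= M * T)%N -> ((1 < M)%N -> ((M - 1) * T < t)%N) ->
  (forall j i, (i <= M * T)%N -> par_cyl M K t j i (xs j i)) <->
  [/\ A (xs K t), exit_time S (xs K) = Some t,
      (1 < M)%N -> forall j i, (i <= (M - 1) * T)%N -> S (xs j i) &
      forall (j : 'I_N) i, (j < K)%N -> (i <= M * T)%N -> S (xs j i)].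
Proof.
move=> leMt ltMt; split=> [cyl|[AK Et stay_prev stay_K] j i iM].
  have [AK xKt] : A (xs K t) /\ ~ S (xs K t).
    by have := cyl K t leMt; rewrite /par_cyl ltnn eqxx ltnn eqxx; case.
  split => //.
  - apply/exit_time_SomeP; split => // i it.
    by have := cyl K i (leq_trans (ltnW it) leMt); rewrite /par_cyl ltnn eqxx it.
  - move=> M1 j i iM; have MM : ((M - 1) * T <= M * T)%N by rewrite leq_mul2r leq_subr orbT.
    have := cyl j i (leq_trans iM MM); rewrite /par_cyl.
    case: ifP => // _; case: ifP => _; last by rewrite M1 iM.
    by rewrite (leq_ltn_trans iM (ltMt M1)).
  - by move=> j i jK iM; have := cyl j i iM; rewrite /par_cyl jK.
move: Et => /exit_time_SomeP[xKt xKlt]; rewrite /par_cyl.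
case: ltnP => [jK|_]; first exact: stay_K.
case: eqP => [->|_]; last by case: ifP => // /andP[/stay_prev]; apply.
case: ltnP => [/xKlt //|_]; case: eqP => [-> //|//].
Qed.

Lemma par_data_cylP xs n :
  (exists y, par_data N T S xs = Some (y, n) /\ A y) <->
  exists M (K : 'I_N) t, par_decomp N T M K t n /\
    forall j i, (i <= M * T)%N -> par_cyl M K t j i (xs j i).
Proof.
split.
  move=> [y [/par_dataP[M [K [t [dec -> Et stay_prev stay_K]]]] Ay]].
  by exists M, K, t; split => //; case: dec => _ _ leMt ltMt _; apply/par_cylP.
move=> [M [K [t [dec]]]]; have [_ _ leMt ltMt _] := dec.
move=> /(par_cylP _ _ leMt ltMt)[AK Et stay_prev stay_K].
by exists (xs K t); split => //; apply/par_dataP; exists M, K, t.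
Qed.

End par_data.

Arguments par_cyl {d Omega} N T S A M K t j i.

Lemma integral_mrestr d (T : measurableType d) (R : realType) (mu : measure T R)
    (D : set T) (mD : measurable D) (f : T -> \bar R) :
  measurable_fun setT f -> (forall x, 0 <= f x)%E ->
  (\int[mu]_(x in D) f x = \int[mrestr mu mD]_x f x)%E.
Proof.
move=> mf f0.
rewrite (@ge0_negligible_integral _ _ _ (mrestr mu mD) setT (~` D)) //; last 2 first.
- exact: measurableC.
- by transitivity (mu set0); [rewrite -(setICl D) | exact: measure0].
rewrite setTD setCK; apply: eq_measure_integral => A mA AD.
by rewrite -[in LHS](setIidl AD).
Qed.

Lemma measure_setI_conull d (T : measurableType d) (R : realType) (mu : measure T R)
    (E G : set T) :
  measurable E -> measurable G -> mu (~` G) = 0%E -> mu E = mu (E `&` G).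
Proof.
move=> mE mG G0; have mCG := measurableC mG.
rewrite -{1}(setIT E) -(setUCr G) setIUr measureU //; last 3 first.
- exact: measurableI.
- exact: measurableI.
- by rewrite setIACA setICr setI0.
by rewrite (@subset_measure0 _ _ _ mu (E `&` ~` G) (~` G)) ?adde0 //; exact: measurableI.
Qed.

Lemma measurable_cylinders d (Omega : measurableType d) dT (T : measurableType dT)
    (N h : nat) (Xs : 'I_N -> nat -> T -> Omega) (B : 'I_N -> nat -> set Omega) :
  (forall j i, measurable_fun setT (Xs j i)) -> (forall j i, measurable (B j i)) ->
  measurable [set w | forall j i, (i <= h)%N -> B j i (Xs j i w)].
Proof.
move=> mXs mB.
have -> : [set w | forall j i, (i <= h)%N -> B j i (Xs j i w)] =
    \bigcap_(i in [set i | (i <= h)%N]) \bigcap_(j in [set: 'I_N]) (Xs j i @^-1` B j i).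
  by apply/seteqP; split => w /= Bw => [i ih j _|j i ih]; apply: Bw.
apply: bigcap_measurableType => i _; apply: fin_bigcap_measurable; first exact: finite_finset.
by move=> j _; rewrite -(setTI (_ @^-1` _)); apply: mXs.
Qed.

Section stay.
Context {d : measure_display} {Omega : measurableType d}.
Context {dT : measure_display} {T : measurableType dT}.
Variables (S : set Omega) (Y : nat -> T -> Omega).

Definition stay (n : nat) : set T := [set w | forall i, (i <= n)%N -> S (Y i w)].

Lemma survivesE n : survives S Y n = stay n.
Proof. by apply/seteqP; split => w /ole_exit_timePn. Qed.

Lemma stayS_preimage n (B : set Omega) :
  stay n.+1 `&` Y n.+1 @^-1` B = stay n `&` Y n.+1 @^-1` (B `&` S).
Proof.
apply/seteqP; split => w /=.
  move=> [Sw Bw]; split; last by split => //; apply: Sw.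
  by move=> i i_n; apply: Sw; rewrite (leq_trans i_n).
move=> [Sw [Bw SYw]]; split => // i; rewrite leq_eqVlt => /orP [/eqP -> //|].
by rewrite ltnS => /Sw.
Qed.

End stay.

Section markov_chain.
Local Open Scope ereal_scope.
Context (R : realType) (d : measure_display) (Omega : measurableType d)
  (k : R.-pker Omega ~> Omega) (S : set Omega) (nu : probability Omega R)
  (dT : measure_display) (T : measurableType dT) (Q : probability T R)
  (Y : nat -> T -> Omega).
Hypotheses (mS : measurable S) (HM : markov_chain Q k Y) (HI : initial_law Q Y nu).

Lemma measurable_stay n : measurable (stay S Y n).
Proof.
have -> : stay S Y n = \bigcap_(i in [set i | (i <= n)%N]) (Y i @^-1` S).
  by apply/seteqP; split => w /= Sw i /Sw.
apply: bigcap_measurableType => i _.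
by rewrite -(setTI (_ @^-1` _)); apply: (HM.1 i).
Qed.

Lemma stay0_preimage B : measurable B ->
  Q (stay S Y 0 `&` Y 0%N @^-1` B) = nu (B `&` S).
Proof.
move=> mB; rewrite -HI; last exact: measurableI.
congr (Q _); apply/seteqP; split => w /=.
  by move=> [Sw Bw]; split => //; apply: Sw.
by move=> [Bw Sw]; split => // i; rewrite leqn0 => /eqP ->.
Qed.

Lemma stay_step n B : measurable B ->
  Q (stay S Y n `&` Y n.+1 @^-1` B) = \int[Q]_(w in stay S Y n) k (Y n w) B.
Proof. by move=> mB; rewrite (HM.2 n (fun _ => S) B). Qed.

Lemma integral_stay n (r : R) : (0 <= r)%R ->
  (forall B, measurable B -> Q (stay S Y n `&` Y n @^-1` B) = r%:E * nu (B `&` S)) ->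
  forall g, measurable_fun setT g -> (forall x, 0 <= g x) ->
  \int[Q]_(w in stay S Y n) g (Y n w) = r%:E * \int[nu]_(x in S) g x.
Proof.
move=> r0 lawY g mg g0.
have mYn : measurable_fun setT (Y n) := HM.1 n.
rewrite (integral_mrestr _ (measurable_stay n)) //; last exact: measurableT_comp.
transitivity (\int[pushforward (mrestr Q (measurable_stay n)) (Y n)]_y g y).
  by rewrite ge0_integral_pushforward.
rewrite (eq_measure_integral (mscale (NngNum r0) (mrestr nu mS))); last first.
  by move=> A mA _; rewrite /mscale /= /pushforward /mrestr /= setIC lawY.
by rewrite ge0_integral_mscale //= -integral_mrestr.
Qed.

Lemma qsd_kernel_eigen : is_qsd Q Y S nu ->
  exists2 lambda : R, (0 <= lambda)%R & forall B, measurable B ->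
    \int[nu]_(x in S) k x (B `&` S) = lambda%:E * nu (B `&` S).
Proof.
move=> [_ qsd]; set lambda := fine (Q (stay S Y 1)).
have Qstay1 : Q (stay S Y 1) = lambda%:E.
  by rewrite fineK // fin_num_measure //; exact: measurable_stay.
exists lambda; first by rewrite -lee_fin -Qstay1 measure_ge0.
move=> B mB; have mBS : measurable (B `&` S) by exact: measurableI.
have [Q1_gt0 nuBS] := qsd _ 1%N mBS (@subIsetr _ B S).
rewrite /cond_prob survivesE Qstay1 in Q1_gt0 nuBS.
have law0 B' : measurable B' -> Q (stay S Y 0 `&` Y 0%N @^-1` B') = 1%:E * nu (B' `&` S).
  by move=> mB'; rewrite mul1e stay0_preimage.
rewrite nuBS.
have -> : Y 1%N @^-1` (B `&` S) `&` stay S Y 1 = stay S Y 0 `&` Y 1%N @^-1` (B `&` S).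
  by rewrite setIC stayS_preimage -setIA setIid.
rewrite stay_step // (integral_stay ler01 law0 (g := fun x => k x (B `&` S))) //.
- have lambda_gt0 : (0 < lambda)%R by rewrite -lte_fin.
  by rewrite mul1e inver (gt_eqF lambda_gt0) muleCA -EFinM mulfV ?mule1 // gt_eqF.
- exact: measurable_kernel.
Qed.

Variable lambda : R.
Hypotheses (lambda0 : (0 <= lambda)%R) (nuS : nu (~` S) = 0)
  (eigen : forall B, measurable B ->
     \int[nu]_(x in S) k x (B `&` S) = lambda%:E * nu (B `&` S)).

Lemma stay_preimage n B : measurable B ->
  Q (stay S Y n `&` Y n @^-1` B) = (lambda ^+ n)%:E * nu (B `&` S).
Proof.
elim: n B => [|n IH] B mB; first by rewrite stay0_preimage // expr0 mul1e.
have mBS : measurable (B `&` S) by exact: measurableI.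
rewrite stayS_preimage stay_step //.
rewrite (integral_stay (exprn_ge0 n lambda0) IH (g := fun x => k x (B `&` S))) //.
- by rewrite eigen // exprS EFinM muleA [X in X * _]muleC.
- exact: measurable_kernel.
Qed.

Lemma measure_stay n : Q (stay S Y n) = (lambda ^+ n)%:E.
Proof.
have := stay_preimage n measurableT.
rewrite preimage_setT setIT setTI => ->.
suff -> : nu S = 1 by rewrite mule1.
rewrite -[LHS]adde0 -nuS -measureU ?setUCr //.
- exact: probability_setT.
- exact: measurableC.
- by rewrite setICr.
Qed.

Lemma stay_exit n B : measurable B ->
  Q (stay S Y n `&` Y n.+1 @^-1` B) = (lambda ^+ n)%:E * \int[nu]_(x in S) k x B.
Proof.
move=> mB; rewrite stay_step //.
rewrite (integral_stay (exprn_ge0 n lambda0) (stay_preimage n) (g := fun x => k x B)) //.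
exact: measurable_kernel.
Qed.

Lemma exit_data_law B n : measurable B ->
  Q [set w | exists y, exit_data S (fun i => Y i w) = Some (y, n) /\ B y] =
  if n is t.+1 then (lambda ^+ t)%:E * \int[nu]_(x in S) k x (B `&` ~` S) else 0.
Proof.
move=> mB; have mBS : measurable (B `&` ~` S) by apply: measurableI => //; exact: measurableC.
case: n => [|t].
  rewrite (_ : [set w | _] = Y 0%N @^-1` (B `&` ~` S)).
    rewrite HI //; apply: (subset_measure0 _ _ (@subIsetr _ B _) nuS) => //.
    exact: measurableC.
  apply/seteqP; split=> w /=; first by move=> /exit_data_SomeP[/exit_time_SomeP[]].
  by move=> [Bw Sw]; apply/exit_data_SomeP; split=> //; apply/exit_time_SomeP.
rewrite -stay_exit //; congr (Q _).
apply/seteqP; split=> w /=.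
  by move=> /exit_data_SomeP[/exit_time_SomeP[Sw stayw] Bw]; split => // i /stayw.
move=> [stayw [Bw Sw]]; apply/exit_data_SomeP; split=> //.
by apply/exit_time_SomeP; split=> // i /stayw.
Qed.

End markov_chain.

Section parallel_replicas.
Local Open Scope ereal_scope.
Context (R : realType) (d : measure_display) (Omega : measurableType d)
  (k : R.-pker Omega ~> Omega) (S : set Omega) (nu : probability Omega R)
  (dT : measure_display) (T : measurableType dT) (P : probability T R)
  (N Tp : nat) (Xs : 'I_N -> nat -> T -> Omega) (A : set Omega).
Hypotheses (mS : measurable S) (mA : measurable A)
  (HMs : forall j, markov_chain P k (Xs j)) (HIs : forall j, initial_law P (Xs j) nu)
  (Hind : indep_processes P Xs).
Variable lambda : R.
Hypotheses (lambda0 : (0 <= lambda)%R) (nuS : nu (~` S) = 0)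
  (eigen : forall B, measurable B ->
     \int[nu]_(x in S) k x (B `&` S) = lambda%:E * nu (B `&` S)).

Let mXs j i : measurable_fun setT (Xs j i) := (HMs j).1 i.
Let c := \int[nu]_(x in S) k x (A `&` ~` S).
Let cyl (M : nat) (K : 'I_N) (t : nat) : set T :=
  [set w | forall j i, (i <= M * Tp)%N -> par_cyl N Tp S A M K t j i (Xs j i w)].

Lemma measurable_par_cyl M K t j i : measurable (par_cyl N Tp S A M K t j i).
Proof.
have mAS : measurable (A `&` ~` S) by apply: measurableI => //; exact: measurableC.
by rewrite /par_cyl; repeat case: ifP => _.
Qed.

Lemma measure_par_cyl_replica M K t (j : 'I_N) :
  (t <= M * Tp)%N -> ((1 < M)%N -> ((M - 1) * Tp < t)%N) -> (0 < t)%N ->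
  P [set w | forall i, (i <= M * Tp)%N -> par_cyl N Tp S A M K t j i (Xs j i w)] =
  (lambda ^+ (if j < K then M * Tp else if j == K then t.-1 else (M - 1) * Tp)%N)%:E
  * (if j == K then c else 1).
Proof.
move=> leMt ltMt t0; rewrite /par_cyl.
have stayE n := measure_stay mS (HMs j) (HIs j) lambda0 nuS eigen n.
have [jK|Kj] := ltnP j K.
  rewrite ifF ?mule1 -?stayE; last by rewrite -val_eqE ltn_eqF.
  by congr (P _); apply/seteqP; split => w.
have [->|njK] := eqVneq j K.
  have mAS : measurable (A `&` ~` S) by apply: measurableI => //; exact: measurableC.
  rewrite -(stay_exit mS (HMs K) (HIs K) lambda0 eigen _ mAS) prednK //.
  congr (P _); apply/seteqP; split => w /= cylw.
    split=> [i it|]; last by have := cylw t leMt; rewrite ltnn eqxx.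
    have := cylw i (leq_trans it (leq_trans (leq_pred t) leMt)).
    by rewrite (leq_ltn_trans it) ?prednK.
  case: cylw => stayw Aw i _; case: ltnP => [it|_]; first by apply: stayw; lia.
  by case: eqP => [->|].
rewrite mule1.
have [M1|M1] := leqP M 1.
  rewrite (_ : (M - 1)%N = 0%N) ?mul0n ?expr0; last by lia.
  by rewrite -(probability_setT P); congr (P _); apply/seteqP; split.
rewrite -stayE; congr (P _); apply/seteqP; split => w /= cylw i iM.
  have MM : ((M - 1) * Tp <= M * Tp)%N by rewrite leq_mul2r leq_subr orbT.
  by have := cylw i (leq_trans iM MM); rewrite iM.
by case: ifP => // /cylw.
Qed.

Lemma measure_par_cyl M (K : 'I_N) t n : par_decomp N Tp M K t n -> (0 < t)%N ->
  P (cyl M K t) = (lambda ^+ n.-1)%:E * c.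
Proof.
move=> dec t0; have [_ _ leMt ltMt _] := dec.
rewrite /cyl (Hind (M * Tp)%N (measurable_par_cyl M K t)).
rewrite (eq_bigr _ (fun j _ => measure_par_cyl_replica K j leMt ltMt t0)).
rewrite big_split /= prodEFin prodrXr (par_exponent_sum dec t0).
by rewrite (bigD1 K) //= eqxx big1 ?mule1 // => j /negbTE ->.
Qed.

Lemma measurable_par_data_event n :
  measurable [set w | exists y, par_data N Tp S (fun j i => Xs j i w) = Some (y, n) /\ A y].
Proof.
rewrite (_ : [set w | _] = \bigcup_(M in [set: nat]) \bigcup_(K in [set: 'I_N])
    \bigcup_(t in [set t | par_decomp N Tp M K t n]) cyl M K t).
  apply: bigcup_measurable => M _; apply: fin_bigcup_measurable => [|K _].
    exact: finite_finset.
  by apply: bigcup_measurable => t _; exact: measurable_cylinders mXs (measurable_par_cyl M K t).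
apply/seteqP; split => w /=.
  by move=> /par_data_cylP[M [K [t [dec cylw]]]]; exists M => //; exists K => //; exists t.
by move=> [M _ [K _ [t dec cylw]]]; apply/par_data_cylP; exists M, K, t.
Qed.

(* Off this conull event the accepted exit time is positive, which makes the
   decomposition of [n] unique. *)
Let started := [set w | forall j i, (i <= 0)%N -> S (Xs j i w)].

Lemma measurable_started : measurable started.
Proof. exact: measurable_cylinders mXs (fun _ _ => mS). Qed.

Lemma measure_started_compl : P (~` started) = 0.
Proof.
rewrite probability_setC; last exact: measurable_started.
rewrite (Hind 0%N (fun _ _ => mS)) big1 ?subee // => j _.
by have := measure_stay mS (HMs j) (HIs j) lambda0 nuS eigen 0; rewrite expr0.
Qed.

Lemma started_exit_gt0 M K t w : started w -> cyl M K t w -> (0 < t)%N.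
Proof.
move=> sw cylw; rewrite lt0n; apply/eqP => t0; move: cylw; rewrite t0 => /(_ K 0%N (leq0n _)).
by rewrite /par_cyl ltnn eqxx ltnn eqxx => -[_]; apply; apply: sw.
Qed.

Lemma par_data_law n : (0 < N)%N -> (0 < Tp)%N ->
  P [set w | exists y, par_data N Tp S (fun j i => Xs j i w) = Some (y, n) /\ A y] =
  if n is t.+1 then (lambda ^+ t)%:E * c else 0.
Proof.
move=> N0 T0.
rewrite (measure_setI_conull (measurable_par_data_event n) measurable_started
  measure_started_compl).
have [n0|n_gt0] := posnP n.
  rewrite n0 (_ : _ `&` _ = set0) ?measure0 //; apply/seteqP; split => // w [].
  move=> /par_data_cylP[M [K [t [[_ _ _ _ tn] cylw]]]] sw.
  have : (t <= 0)%N by rewrite [X in (_ <= X)%N]tn leq_addl.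
  by rewrite leqNgt (started_exit_gt0 sw cylw).
have [M [j [t [dec t0]]]] := par_decomp_exists N0 T0 n_gt0.
have [_ jN _ _ _] := dec; pose K := Ordinal jN.
have decK : par_decomp N Tp M K t n := dec.
rewrite (_ : _ `&` _ = cyl M K t `&` started).
  rewrite -measure_setI_conull.
  - by rewrite -[in RHS](prednK n_gt0); exact: measure_par_cyl decK t0.
  - exact: measurable_cylinders mXs (measurable_par_cyl M K t).
  - exact: measurable_started.
  - exact: measure_started_compl.
apply/seteqP; split => w [cylw sw]; last by split => //; apply/par_data_cylP; exists M, K, t.
move: cylw => /par_data_cylP[M' [K' [t' [dec' cylw]]]].
have [eM jK' et] := par_decomp_uniq decK t0 dec' (started_exit_gt0 sw cylw).
have eK : K = K' by apply: val_inj.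
by subst M' K' t'.
Qed.

End parallel_replicas.

Theorem proposition1
  (R : realType) (d : measure_display) (Omega : measurableType d)
  (k : R.-pker Omega ~> Omega) (S : set Omega) (nu : probability Omega R)
  (d0 : measure_display) (T0 : measurableType d0) (P0 : probability T0 R)
  (X : nat -> T0 -> Omega)
  (dT : measure_display) (T : measurableType dT) (P : probability T R)
  (N Tpoll : nat) (Xs : 'I_N -> nat -> T -> Omega) :
  measurable S ->
  markov_chain P0 k X -> initial_law P0 X nu -> is_qsd P0 X S nu ->
  (1 <= N)%N -> (1 <= Tpoll)%N ->
  (forall j, markov_chain P k (Xs j)) ->
  (forall j, initial_law P (Xs j) nu) ->
  indep_processes P Xs ->
  forall (A : set Omega) (n : nat), measurable A ->
    P [set w | exists y, par_data N Tpoll S (fun j i => Xs j i w) = Some (y, n) /\ A y] =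
    P0 [set w | exists y, exit_data S (fun i => X i w) = Some (y, n) /\ A y].
Proof.
move=> mS HM0 HI0 qsd N_gt0 T_gt0 HMs HIs Hind A n mA.
have [lambda lambda0 eigen] := qsd_kernel_eigen mS HM0 HI0 qsd.
have nuS := qsd.1.
rewrite (par_data_law mS mA HMs HIs Hind lambda0 nuS eigen n N_gt0 T_gt0).
by rewrite (exit_data_law mS HM0 HI0 lambda0 nuS eigen n mA).
Qed.
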